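(* In the single-node mining process with $\phi(s)=\log_2 s$ and $R\ge2$, the expected total number of hash attempts needed for the node to build a block-chain of length $L\ge1$ is at most $$D_s\sum_{n=0}^{L-1}\frac{1}{\log_2(n+1)+\log_2R}.$$
   Context: Fix real parameters $M>0$ (scale of the system), $R\ge 2$ (the stake reward StakRwd), $0<D_c\le D_s$ (coin-issue difficulty constant CoinD and stake-issue difficulty constant StakD). Put $p=D_c/D_s$, $q=1-p$. Single-node mining process with threshold function $\phi$: a node, who makes no stake transactions with anybody, starts with stake $S_0=0$. For $n=0,1,2,\dots$ the $(n+1)$-th block is produced as follows: the node makes successive hash attempts, each producing a hash value uniformly distributed on $[0,M]$, independent of all previous randomness; the block is created at the first attempt whose hash $h$ satisfies $h\le M\phi(R+S_n)/D_c$ (the coin-issue threshold), and then $S_{n+1}=S_n+R$ if moreover $h\le M\phi(R+S_n)/D_s$ (the stake-issue threshold), otherwise $S_{n+1}=S_n$. Assume $0<\phi(R+S)\le D_c$ for all $S\in\{0,R,2R,\dots,(L-1)R\}$. Time is measured as the total number of hash attempts. In this statement $\phi(s)=\log_2 s$ (logarithmic stake system). *)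

From Stdlib Require Import Reals Lra List.
Open Scope R_scope.

Definition log2 (s : R) : R := ln s / ln 2.

Definition unif_cdf (M x : R) : R := Rmax 0 (Rmin 1 (x / M)).

(* Classification of a single hash attempt relative to the current thresholds:
   Fail      : h >  coin-issue threshold (no block)
   CoinOnly  : stake-threshold < h <= coin-issue threshold (block, stake unchanged)
   StakeCoin : h <= stake-issue threshold (block, stake increases by R) *)
Inductive outcome := Fail | CoinOnly | StakeCoin.

Definition step_prob (phi : R -> R) (M Rw Dc Ds S : R) (o : outcome) : R :=
  let c := unif_cdf M (M * phi (Rw + S) / Dc) in
  let s := unif_cdf M (M * phi (Rw + S) / Ds) in
  match o with
  | Fail => 1 - c
  | CoinOnly => c - s
  | StakeCoin => s
  end.

Definition next_stake (Rw S : R) (o : outcome) : R :=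
  match o with StakeCoin => S + Rw | _ => S end.

Fixpoint path_prob (phi : R -> R) (M Rw Dc Ds S : R) (l : list outcome) : R :=
  match l with
  | nil => 1
  | o :: l' => step_prob phi M Rw Dc Ds S o * path_prob phi M Rw Dc Ds (next_stake Rw S o) l'
  end.

Fixpoint all_hist (t : nat) : list (list outcome) :=
  match t with
  | O => nil :: nil
  | S t' => flat_map (fun l => (Fail :: l) :: (CoinOnly :: l) :: (StakeCoin :: l) :: nil)
                     (all_hist t')
  end.

Definition is_block (o : outcome) : bool :=
  match o with Fail => false | _ => true end.

Definition nblocks (l : list outcome) : nat := length (filter is_block l).

Definition completes_at (L : nat) (l : list outcome) : bool :=
  Nat.eqb (nblocks l) L && is_block (last l Fail).

(* P(T = t), T = total number of hash attempts until the chain has length L,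
   for the process started at stake S_0 = 0 *)
Definition prob_T (phi : R -> R) (M Rw Dc Ds : R) (L t : nat) : R :=
  fold_right Rplus 0
    (map (fun l => if completes_at L l then path_prob phi M Rw Dc Ds 0 l else 0)
         (all_hist t)).

(* Between two blocks the node makes a geometric number of attempts: after k stake issues an
   attempt creates a block with probability phi_k / Dc, where phi_k = log2 (R + k R), and that
   block is a stake issue with probability p = Dc / Ds.  First-step analysis shows that the
   time of the L-th block is almost surely finite, with mean Dc * sum_(i<L) E [1 / phi_(B_i)],
   where B_i ~ Binomial (i, p) counts the stake issues among the first i blocks.  For R >= 2 the
   ratio phi_n / (n + 1) is nonincreasing, so 1 / phi_B <= (i + 1) / (phi_i (B + 1)) for B <= i;
   and E [1 / (B_i + 1)] = (1 - (1 - p) ^ (i + 1)) / ((i + 1) p) <= 1 / ((i + 1) p).  Hence the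
   i-th term is at most Ds / phi_i. *)

From Stdlib Require Import Reals Lra Lia List.
Open Scope R_scope.

Definition hist_sum (g : list outcome -> R) (ls : list (list outcome)) : R :=
  fold_right Rplus 0 (map g ls).

Lemma hist_sum_ext g1 g2 ls :
  (forall l, g1 l = g2 l) -> hist_sum g1 ls = hist_sum g2 ls.
Proof. intro H; unfold hist_sum; f_equal; apply map_ext, H. Qed.

Lemma hist_sum_all_hist_S g t :
  hist_sum g (all_hist (S t)) =
  hist_sum (fun l => g (Fail :: l) + g (CoinOnly :: l) + g (StakeCoin :: l)) (all_hist t).
Proof.
  unfold hist_sum; simpl.
  induction (all_hist t) as [|l ls IH]; simpl; [ring | rewrite IH; ring].
Qed.

Lemma hist_sum_lin3 a b d g1 g2 g3 ls :
  hist_sum (fun l => a * g1 l + b * g2 l + d * g3 l) ls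
  = a * hist_sum g1 ls + b * hist_sum g2 ls + d * hist_sum g3 ls.
Proof. unfold hist_sum; induction ls as [|l ls IH]; simpl; [ring | rewrite IH; ring]. Qed.

Lemma last_not_block l d :
  is_block d = false -> nblocks l = 0%nat -> is_block (last l d) = false.
Proof.
  unfold nblocks; induction l as [|a l IH]; intros Hd Hn; [exact Hd|].
  destruct a; try discriminate; destruct l; auto.
Qed.

(* Unlike [completes_at], this counts the empty history as completing zero blocks. *)
Definition completes_in (j : nat) (l : list outcome) : bool :=
  match l with nil => Nat.eqb j 0 | _ => completes_at j l end.

Lemma completes_in_cons j o l :
  completes_in j (o :: l) =
  match j with
  | O => false
  | S j' => if is_block o then completes_in j' l else completes_in j l
  end.
Proof.
  destruct j as [|j].
  - unfold completes_in, completes_at.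
    destruct (Nat.eqb_spec (nblocks (o :: l)) 0) as [H|]; [|reflexivity].
    exact (last_not_block _ Fail eq_refl H).
  - destruct o, l; try destruct j; reflexivity.
Qed.

Section Passage.

Variables (phi : R -> R) (M Rw Dc Ds : R).

Definition passage_prob (s : R) (j t : nat) : R :=
  hist_sum (fun l => if completes_in j l then path_prob phi M Rw Dc Ds s l else 0)
    (all_hist t).

Lemma passage_prob_0 s t : passage_prob s 0 t = if Nat.eqb t 0 then 1 else 0.
Proof.
  destruct t as [|t]; [unfold passage_prob, hist_sum; simpl; ring|].
  unfold passage_prob; rewrite hist_sum_all_hist_S.
  transitivity (hist_sum (fun l => 0 * 0 + 0 * 0 + 0 * 0) (all_hist t)).
  - apply hist_sum_ext; intro l; rewrite !completes_in_cons; ring.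
  - rewrite (hist_sum_lin3 0 0 0 (fun _ => 0) (fun _ => 0) (fun _ => 0)); simpl; ring.
Qed.

Lemma passage_prob_S_0 s j : passage_prob s (S j) 0 = 0.
Proof. unfold passage_prob, hist_sum; simpl; ring. Qed.

Lemma passage_prob_S_S s j t :
  passage_prob s (S j) (S t) =
  step_prob phi M Rw Dc Ds s Fail * passage_prob s (S j) t
  + step_prob phi M Rw Dc Ds s CoinOnly * passage_prob s j t
  + step_prob phi M Rw Dc Ds s StakeCoin * passage_prob (s + Rw) j t.
Proof.
  unfold passage_prob; rewrite hist_sum_all_hist_S, <- hist_sum_lin3.
  apply hist_sum_ext; intro l; rewrite !completes_in_cons; simpl.
  destruct (completes_in (S j) l), (completes_in j l); ring.
Qed.

Lemma prob_T_passage j t : prob_T phi M Rw Dc Ds (S j) t = passage_prob 0 (S j) t.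
Proof. unfold prob_T, passage_prob, hist_sum; f_equal; apply map_ext; now intros []. Qed.

End Passage.

Lemma Un_cv_const c : Un_cv (fun _ => c) c.
Proof. intros eps Heps; exists 0%nat; intros; unfold Rdist; rewrite Rminus_diag, Rabs_R0; lra. Qed.

Lemma Un_cv_scal c u l : Un_cv u l -> Un_cv (fun n => c * u n) (c * l).
Proof. apply CV_mult, Un_cv_const. Qed.

Lemma infinite_sum_ext u v l :
  (forall t, u t = v t) -> infinite_sum u l -> infinite_sum v l.
Proof.
  intros Huv Hu eps Heps; destruct (Hu eps Heps) as [N HN]; exists N; intros n Hn.
  rewrite <- (sum_eq u); auto.
Qed.

Lemma infinite_sum_partial_const u l :
  (forall n, sum_f_R0 u n = l) -> infinite_sum u l.
Proof.
  intros H eps Heps; exists 0%nat; intros n _.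
  rewrite H; unfold Rdist; rewrite Rminus_diag, Rabs_R0; lra.
Qed.

Lemma sum_f_R0_growing x : (forall t, 0 <= x t) -> Un_growing (sum_f_R0 x).
Proof. intros Hx n; rewrite tech5; specialize (Hx (S n)); lra. Qed.

Lemma sum_f_R0_le_infinite_sum x l :
  (forall t, 0 <= x t) -> infinite_sum x l -> forall n, sum_f_R0 x n <= l.
Proof. intros Hx Hl; apply growing_ineq; [apply sum_f_R0_growing|]; assumption. Qed.

Lemma sum_f_R0_shift0 x n : x 0%nat = 0 -> sum_f_R0 x (S n) = sum_f_R0 (fun t => x (S t)) n.
Proof. intro H0; rewrite decomp_sum by lia; simpl pred; rewrite H0; ring. Qed.

Lemma sum_f_R0_lin2 a b x y n :
  sum_f_R0 (fun t => a * x t + b * y t) n = a * sum_f_R0 x n + b * sum_f_R0 y n.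
Proof. induction n as [|n IH]; simpl; [ring | rewrite IH; ring]. Qed.

Lemma sum_f_R0_lin3 a b d x y z n :
  sum_f_R0 (fun t => a * x t + b * y t + d * z t) n
  = a * sum_f_R0 x n + b * sum_f_R0 y n + d * sum_f_R0 z n.
Proof. induction n as [|n IH]; simpl; [ring | rewrite IH; ring]. Qed.

Lemma Un_cv_growing_affine (A r : nat -> R) (a rho : R) :
  0 <= a < 1 -> Un_growing A -> A 0%nat <= rho / (1 - a) ->
  Un_cv r rho -> (forall n, r n <= rho) ->
  (forall n, A (S n) = a * A n + r n) -> Un_cv A (rho / (1 - a)).
Proof.
  intros ha Hgrow HA0 Hr Hrle Hrec.
  set (X := rho / (1 - a)) in *.
  assert (HX : a * X + rho = X) by (unfold X; field; lra).
  assert (Hbound : forall n, A n <= X).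
  { induction n as [|n IH]; [exact HA0|].
    rewrite Hrec; specialize (Hrle n).
    assert (a * A n <= a * X) by (apply Rmult_le_compat_l; lra); lra. }
  destruct (growing_cv A Hgrow) as [l Hl].
  { exists X; intros y [n ->]; apply Hbound. }
  assert (Hshift : Un_cv (fun n => A (n + 1)%nat) (a * l + rho)).
  { intros eps Heps; destruct (CV_plus _ _ _ _ (Un_cv_scal a _ _ Hl) Hr eps Heps) as [N HN].
    exists N; intros n Hn; rewrite Nat.add_1_r, Hrec; exact (HN n Hn). }
  assert (Hfix : l = a * l + rho) by exact (UL_sequence _ _ _ (CV_shift' _ 1 _ Hl) Hshift).
  replace X with l; [exact Hl|].
  assert (Hzero : (1 - a) * (l - X) = 0) by lra.
  destruct (Rmult_integral _ _ Hzero); lra.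
Qed.

Section Renewal.

(* First-step analysis: [x] is the law of a time made of a geometric wait, at each step of
   which the wait ends with probability [b + d], followed by an independent time of law [y]
   (with weight [b]) or [z] (with weight [d]). *)
Variables (x y z : nat -> R) (a b d : R).
Hypotheses (ha : 0 <= a < 1) (hb : 0 <= b) (hd : 0 <= d) (habd : a + b + d = 1).
Hypotheses (hy : forall t, 0 <= y t) (hz : forall t, 0 <= z t).
Hypotheses (ysum : infinite_sum y 1) (zsum : infinite_sum z 1).
Hypotheses (hx0 : x 0%nat = 0) (hxS : forall t, x (S t) = a * x t + b * y t + d * z t).

Lemma renewal_nonneg t : 0 <= x t.
Proof.
  induction t as [|t IH]; [lra|]; rewrite hxS.
  pose proof (Rmult_le_pos _ _ (proj1 ha) IH); pose proof (Rmult_le_pos _ _ hb (hy t));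
  pose proof (Rmult_le_pos _ _ hd (hz t)); lra.
Qed.

Lemma renewal_sum : infinite_sum x 1.
Proof.
  pose proof (sum_f_R0_le_infinite_sum _ _ hy ysum) as yle.
  pose proof (sum_f_R0_le_infinite_sum _ _ hz zsum) as zle.
  replace 1 with ((b * 1 + d * 1) / (1 - a))
    by (replace (b * 1 + d * 1) with (1 - a) by lra; field; lra).
  apply (Un_cv_growing_affine _ (fun n => b * sum_f_R0 y n + d * sum_f_R0 z n));
    try apply sum_f_R0_growing; try assumption.
  - exact renewal_nonneg.
  - simpl; rewrite hx0; apply Rmult_le_pos; [lra | left; apply Rinv_0_lt_compat; lra].
  - apply CV_plus; apply Un_cv_scal; assumption.
  - intro n; specialize (yle n); specialize (zle n).
    pose proof (Rmult_le_compat_l _ _ _ hb yle); pose proof (Rmult_le_compat_l _ _ _ hd zle); lra.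
  - intro n; rewrite sum_f_R0_shift0 by exact hx0.
    rewrite (sum_eq _ _ n (fun t _ => hxS t)), sum_f_R0_lin3; ring.
Qed.

Lemma renewal_mean Ey Ez :
  infinite_sum (fun t => INR t * y t) Ey -> infinite_sum (fun t => INR t * z t) Ez ->
  infinite_sum (fun t => INR t * x t) ((1 + b * Ey + d * Ez) / (1 - a)).
Proof.
  intros ymean zmean.
  assert (hw : forall w : nat -> R, (forall t, 0 <= w t) -> forall t, 0 <= INR t * w t)
    by (intros w hw t; apply Rmult_le_pos; [apply pos_INR | apply hw]).
  pose proof (sum_f_R0_le_infinite_sum _ _ renewal_nonneg renewal_sum) as xle.
  pose proof (sum_f_R0_le_infinite_sum _ _ hy ysum) as yle.
  pose proof (sum_f_R0_le_infinite_sum _ _ hz zsum) as zle.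
  pose proof (sum_f_R0_le_infinite_sum _ _ (hw y hy) ymean) as Eyle.
  pose proof (sum_f_R0_le_infinite_sum _ _ (hw z hz) zmean) as Ezle.
  assert (Ey0 : 0 <= Ey) by (specialize (Eyle 0%nat); simpl in Eyle; lra).
  assert (Ez0 : 0 <= Ez) by (specialize (Ezle 0%nat); simpl in Ezle; lra).
  replace (1 + b * Ey + d * Ez) with (a * 1 + b * (Ey + 1) + d * (Ez + 1)) by lra.
  apply (Un_cv_growing_affine _ (fun n => a * sum_f_R0 x n
      + b * (sum_f_R0 (fun t => INR t * y t) n + sum_f_R0 y n)
      + d * (sum_f_R0 (fun t => INR t * z t) n + sum_f_R0 z n)));
    try apply sum_f_R0_growing; try assumption.
  - exact (hw x renewal_nonneg).
  - simpl; rewrite hx0, Rmult_0_r.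
    apply Rmult_le_pos; [|left; apply Rinv_0_lt_compat; lra].
    pose proof (Rmult_le_pos _ _ hb (Rplus_le_le_0_compat _ _ Ey0 Rle_0_1));
    pose proof (Rmult_le_pos _ _ hd (Rplus_le_le_0_compat _ _ Ez0 Rle_0_1)); lra.
  - apply CV_plus; [apply CV_plus|]; apply Un_cv_scal; try apply CV_plus;
      [exact renewal_sum | | | |]; assumption.
  - intro n; specialize (xle n); specialize (yle n); specialize (zle n);
      specialize (Eyle n); specialize (Ezle n).
    pose proof (Rmult_le_compat_l _ _ _ (proj1 ha) xle).
    assert (b * (sum_f_R0 (fun t => INR t * y t) n + sum_f_R0 y n) <= b * (Ey + 1))
      by (apply Rmult_le_compat_l; lra).
    assert (d * (sum_f_R0 (fun t => INR t * z t) n + sum_f_R0 z n) <= d * (Ez + 1))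
      by (apply Rmult_le_compat_l; lra).
    lra.
  - intro n; rewrite sum_f_R0_shift0 by (rewrite hx0; ring).
    rewrite (sum_eq _ (fun t => a * (INR t * x t + x t) + b * (INR t * y t + y t)
                                + d * (INR t * z t + z t)) n)
      by (intros t _; rewrite S_INR, hxS; ring).
    rewrite sum_f_R0_lin3, !plus_sum; ring.
Qed.

End Renewal.

Lemma unif_cdf_in_range M u : 0 < M -> 0 <= u <= 1 -> unif_cdf M (M * u) = u.
Proof.
  intros hM hu; unfold unif_cdf.
  replace (M * u / M) with u by (field; lra).
  rewrite Rmin_right, Rmax_right; lra.
Qed.

Lemma threshold_ratios ph Dc Ds :
  0 < ph <= Dc -> Dc <= Ds -> 0 < ph / Ds <= ph / Dc /\ ph / Dc <= 1.
Proof.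
  intros [hph hDc] hDs; repeat split.
  - apply Rdiv_lt_0_compat; lra.
  - apply Rmult_le_compat_l; [lra|]; apply Rinv_le_contravar; lra.
  - apply Rmult_le_reg_r with Dc; [lra|]; unfold Rdiv; rewrite Rmult_assoc, Rinv_l; lra.
Qed.

Lemma step_prob_in_range phi M Rw Dc Ds s :
  0 < M -> 0 < phi (Rw + s) <= Dc -> Dc <= Ds ->
  step_prob phi M Rw Dc Ds s Fail = 1 - phi (Rw + s) / Dc /\
  step_prob phi M Rw Dc Ds s CoinOnly = phi (Rw + s) / Dc - phi (Rw + s) / Ds /\
  step_prob phi M Rw Dc Ds s StakeCoin = phi (Rw + s) / Ds.
Proof.
  intros hM hph hDs.
  destruct (threshold_ratios _ _ _ hph hDs) as [[hs hsc] hc].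
  assert (scaled : forall D, 0 <= phi (Rw + s) / D <= 1 ->
            unif_cdf M (M * phi (Rw + s) / D) = phi (Rw + s) / D).
  { intros D hD; unfold Rdiv; rewrite Rmult_assoc; apply unif_cdf_in_range; assumption. }
  unfold step_prob; rewrite !scaled by lra; repeat split.
Qed.

(* [binom_avg p w i k] is the mean of [w (k + B)] for [B] binomial with parameters [i] and [p]. *)
Fixpoint binom_avg (p : R) (w : nat -> R) (i k : nat) : R :=
  match i with
  | O => w k
  | S i' => (1 - p) * binom_avg p w i' k + p * binom_avg p w i' (S k)
  end.

Lemma binom_avg_le p w1 w2 i : 0 <= p <= 1 -> forall k,
  (forall r, (k <= r <= k + i)%nat -> w1 r <= w2 r) -> binom_avg p w1 i k <= binom_avg p w2 i k.
Proof.
  intro hp; induction i as [|i IH]; intros k H; simpl.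
  - apply H; lia.
  - apply Rplus_le_compat; apply Rmult_le_compat_l; try lra;
      apply IH; intros r Hr; apply H; lia.
Qed.

Lemma binom_avg_scal p c w i : forall k,
  binom_avg p (fun r => c * w r) i k = c * binom_avg p w i k.
Proof. induction i as [|i IH]; intro k; simpl; [reflexivity | rewrite !IH; ring]. Qed.

(* The identity [E (1 / (1 + B)) = (1 - (1 - p) ^ (i + 1)) / ((i + 1) p)], in a form that
   survives induction on [i]. *)
Lemma binom_avg_inv_succ p i : forall m,
  p * (INR i + 1) * binom_avg p (fun r => / (INR r + 1)) i (S m)
  + INR (S m) * binom_avg p (fun r => / (INR r + 1)) (S i) m = 1.
Proof.
  induction i as [|i IH]; intro m.
  - cbn [binom_avg]; rewrite !S_INR; replace (INR 0) with 0 by reflexivity.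
    pose proof (pos_INR m); field; lra.
  - pose proof (IH m) as H1; pose proof (IH (S m)) as H2.
    cbn [binom_avg] in *; rewrite !S_INR in *.
    set (w := fun r => / (INR r + 1)) in *.
    transitivity ((1 - p) * (p * (INR i + 1) * binom_avg p w i (S m)
                             + (INR m + 1) * ((1 - p) * binom_avg p w i m
                                              + p * binom_avg p w i (S m)))
                  + p * (p * (INR i + 1) * binom_avg p w i (S (S m))
                         + (INR m + 1 + 1) * ((1 - p) * binom_avg p w i (S m)
                                              + p * binom_avg p w i (S (S m))))).
    + ring.
    + rewrite H1, H2; ring.
Qed.

Lemma binom_avg_inv_succ_le p i : 0 <= p <= 1 ->
  p * (INR i + 1) * binom_avg p (fun r => / (INR r + 1)) i 0 <= 1.
Proof.
  intro hp; induction i as [|i IH].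
  - simpl; rewrite Rplus_0_l, Rinv_1; lra.
  - pose proof (binom_avg_inv_succ p i 0) as H.
    change (INR 1) with 1 in H; cbn [binom_avg] in *; rewrite S_INR in *.
    set (v0 := binom_avg p _ i 0) in *; set (v1 := binom_avg p _ i 1) in *.
    replace (p * (INR i + 1 + 1) * ((1 - p) * v0 + p * v1))
      with ((1 - p) * (p * (INR i + 1) * v0)
            + p * (p * (INR i + 1) * v1 + 1 * ((1 - p) * v0 + p * v1)))
      by ring.
    rewrite H; pose proof (Rmult_le_compat_l (1 - p) _ _ ltac:(lra) IH); lra.
Qed.

Section ExpectedTime.

Variables (phi : R -> R) (M Rw Dc Ds : R).
Hypotheses (hM : 0 < M) (hDc : 0 < Dc) (hDcs : Dc <= Ds).

Definition stake_threshold (k : nat) : R := phi (Rw + INR k * Rw).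

(* After [k] stake issues the next block takes [Dc / stake_threshold k] attempts on average,
   and it is a stake issue with probability [Dc / Ds]. *)
Fixpoint expected_time (j k : nat) : R :=
  match j with
  | O => 0
  | S j' => Dc / stake_threshold k + (1 - Dc / Ds) * expected_time j' k
            + Dc / Ds * expected_time j' (S k)
  end.

Lemma passage_law_0 s :
  (forall t, 0 <= passage_prob phi M Rw Dc Ds s 0 t) /\
  infinite_sum (passage_prob phi M Rw Dc Ds s 0) 1 /\
  infinite_sum (fun t => INR t * passage_prob phi M Rw Dc Ds s 0 t) 0.
Proof.
  repeat split.
  - intro t; rewrite passage_prob_0; destruct t; simpl; lra.
  - apply infinite_sum_partial_const; induction n as [|n IH];
      simpl; rewrite ?IH, !passage_prob_0; simpl; ring.
  - apply infinite_sum_partial_const; induction n as [|n IH];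
      simpl; rewrite ?IH, !passage_prob_0; simpl; ring.
Qed.

Lemma passage_law j : forall k,
  (forall m, (m < j)%nat -> 0 < stake_threshold (k + m) <= Dc) ->
  (forall t, 0 <= passage_prob phi M Rw Dc Ds (INR k * Rw) j t) /\
  infinite_sum (passage_prob phi M Rw Dc Ds (INR k * Rw) j) 1 /\
  infinite_sum (fun t => INR t * passage_prob phi M Rw Dc Ds (INR k * Rw) j t)
    (expected_time j k).
Proof.
  induction j as [|j IH]; intros k Hthr; [apply passage_law_0|].
  destruct (IH k) as [ypos [ysum ymean]]; [intros m Hm; apply Hthr; lia|].
  destruct (IH (S k)) as [zpos [zsum zmean]].
  { intros m Hm; replace (S k + m)%nat with (k + S m)%nat by lia; apply Hthr; lia. }
  assert (hph : 0 < stake_threshold k <= Dc)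
    by (rewrite <- (Nat.add_0_r k); apply Hthr; lia).
  destruct (threshold_ratios _ _ _ hph hDcs) as [[hs hsc] hc].
  destruct (step_prob_in_range phi M Rw Dc Ds (INR k * Rw) hM hph hDcs) as [eF [eC eS]].
  set (c := stake_threshold k / Dc) in *; set (s := stake_threshold k / Ds) in *.
  assert (hrec : forall t, passage_prob phi M Rw Dc Ds (INR k * Rw) (S j) (S t)
      = (1 - c) * passage_prob phi M Rw Dc Ds (INR k * Rw) (S j) t
        + (c - s) * passage_prob phi M Rw Dc Ds (INR k * Rw) j t
        + s * passage_prob phi M Rw Dc Ds (INR (S k) * Rw) j t).
  { intro t; rewrite passage_prob_S_S, eF, eC, eS, S_INR.
    replace (INR k * Rw + Rw) with ((INR k + 1) * Rw) by ring; reflexivity. }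
  assert (hweights : 0 <= 1 - c < 1 /\ 0 <= c - s /\ 0 <= s /\ 1 - c + (c - s) + s = 1) by lra.
  destruct hweights as (ha & hb & hd & habd).
  pose proof (passage_prob_S_0 phi M Rw Dc Ds (INR k * Rw) j) as hx0.
  repeat split.
  - exact (renewal_nonneg _ _ _ _ _ _ ha hb hd ypos zpos hx0 hrec).
  - exact (renewal_sum _ _ _ _ _ _ ha hb hd habd ypos zpos ysum zsum hx0 hrec).
  - replace (expected_time (S j) k) with ((1 + (c - s) * expected_time j k
                                          + s * expected_time j (S k)) / (1 - (1 - c)))
      by (unfold c, s; simpl; field; lra).
    exact (renewal_mean _ _ _ _ _ _ ha hb hd habd ypos zpos ysum zsum hx0 hrec _ _ ymean zmean).
Qed.

Lemma expected_time_binom_avg j : forall k,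
  expected_time (S j) k
  = Dc * sum_f_R0 (fun i => binom_avg (Dc / Ds) (fun n => / stake_threshold n) i k) j.
Proof.
  induction j as [|j IH]; intro k.
  - cbn [expected_time sum_f_R0 binom_avg]; unfold Rdiv; ring.
  - cbn [expected_time] in *; rewrite !IH, (decomp_sum _ (S j)) by lia; cbn [pred binom_avg].
    rewrite sum_f_R0_lin2; unfold Rdiv; ring.
Qed.

End ExpectedTime.

Lemma ln_le_of_le x y : 0 < x -> x <= y -> ln x <= ln y.
Proof. intros hx [hxy | <-]; [left; apply ln_increasing | right]; auto. Qed.

Lemma ln_1_plus_lt x : 0 < x -> ln (1 + x) < x.
Proof.
  intro hx; rewrite <- (ln_exp x) at 2.
  apply ln_increasing; [lra | apply exp_ineq1; lra].
Qed.

Definition ln_ratio (c : R) (n : nat) : R := (ln (INR n + 1) + c) / (INR n + 1).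

Lemma ln_ratio_decreasing c : ln 2 <= c -> Un_decreasing (ln_ratio c).
Proof.
  intros hc n; unfold ln_ratio; rewrite S_INR.
  set (a := INR n + 1); assert (ha : 1 <= a) by (unfold a; pose proof (pos_INR n); lra).
  assert (hln : ln (a + 1) = ln a + ln (1 + / a)).
  { assert (0 < / a) by (apply Rinv_0_lt_compat; lra).
    rewrite <- ln_mult by lra; f_equal; field; lra. }
  (* [a ln (1 + 1/a) < 1], while [ln a + c >= 2 ln 2 > 1] as soon as [a >= 2]. *)
  assert (hgap : a * ln (1 + / a) <= ln a + c).
  { assert (Hlt : a * ln (1 + / a) < a * / a)
      by (apply Rmult_lt_compat_l; [lra | apply ln_1_plus_lt, Rinv_0_lt_compat; lra]).
    rewrite Rinv_r in Hlt by lra.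
    destruct n as [|n].
    - unfold a; replace (INR 0 + 1) with 1 by (simpl; ring).
      rewrite ln_1, Rinv_1, Rmult_1_l; replace (1 + 1) with 2 by ring; lra.
    - assert (ln 2 <= ln a)
        by (apply ln_le_of_le; [lra | unfold a; rewrite S_INR; pose proof (pos_INR n); lra]).
      pose proof ln_lt_2; lra. }
  assert (Hdiff : (ln a + c) / a - (ln (a + 1) + c) / (a + 1)
                  = (ln a + c - a * ln (1 + / a)) * / (a * (a + 1)))
    by (rewrite hln; field; lra).
  assert (0 <= (ln a + c - a * ln (1 + / a)) * / (a * (a + 1))).
  { apply Rmult_le_pos; [lra | left; apply Rinv_0_lt_compat; nra]. }
  lra.
Qed.

Lemma log2_stake Rw n : 0 < Rw -> log2 (Rw + INR n * Rw) = log2 (INR n + 1) + log2 Rw.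
Proof.
  intro hR; unfold log2; replace (Rw + INR n * Rw) with ((INR n + 1) * Rw) by ring.
  rewrite ln_mult by (pose proof (pos_INR n); lra).
  pose proof ln_lt_2; field; lra.
Qed.

Lemma log2_stake_pos Rw n : 2 <= Rw -> 0 < log2 (Rw + INR n * Rw).
Proof.
  intro hR; rewrite log2_stake by lra; unfold log2; pose proof ln_lt_2.
  assert (0 <= ln (INR n + 1)) by (rewrite <- ln_1; apply ln_le_of_le; pose proof (pos_INR n); lra).
  pose proof (ln_le_of_le 2 Rw ltac:(lra) hR).
  rewrite <- Rdiv_plus_distr; apply Rdiv_lt_0_compat; lra.
Qed.

Lemma log2_stake_div_succ_decreasing Rw r i : 2 <= Rw -> (r <= i)%nat ->
  log2 (Rw + INR i * Rw) / (INR i + 1) <= log2 (Rw + INR r * Rw) / (INR r + 1).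
Proof.
  intros hR hri.
  assert (Hq : forall n, log2 (Rw + INR n * Rw) / (INR n + 1) = ln_ratio (ln Rw) n / ln 2).
  { intro n; rewrite log2_stake by lra; unfold log2, ln_ratio.
    pose proof ln_lt_2; pose proof (pos_INR n); field; lra. }
  rewrite !Hq; unfold Rdiv; apply Rmult_le_compat_r.
  - left; apply Rinv_0_lt_compat; pose proof ln_lt_2; lra.
  - exact (decreasing_prop _ _ _ (ln_ratio_decreasing _ (ln_le_of_le 2 Rw ltac:(lra) hR)) hri).
Qed.

Lemma inv_log2_stake_le Rw r i : 2 <= Rw -> (r <= i)%nat ->
  / log2 (Rw + INR r * Rw)
  <= (INR i + 1) * / log2 (Rw + INR i * Rw) * / (INR r + 1).
Proof.
  intros hR hri.
  pose proof (log2_stake_div_succ_decreasing Rw r i hR hri).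
  pose proof (log2_stake_pos Rw r hR); pose proof (log2_stake_pos Rw i hR).
  pose proof (pos_INR r); pose proof (pos_INR i).
  replace (/ log2 (Rw + INR r * Rw))
    with (/ (log2 (Rw + INR r * Rw) / (INR r + 1) * (INR r + 1))) by (field; lra).
  replace ((INR i + 1) * / log2 (Rw + INR i * Rw) * / (INR r + 1))
    with (/ (log2 (Rw + INR i * Rw) / (INR i + 1) * (INR r + 1))) by (field; lra).
  apply Rinv_le_contravar.
  - apply Rmult_lt_0_compat; [apply Rdiv_lt_0_compat|]; lra.
  - apply Rmult_le_compat_r; lra.
Qed.

Lemma binom_avg_inv_log2_stake_le Rw Dc Ds i : 2 <= Rw -> 0 < Dc -> Dc <= Ds ->
  Dc * binom_avg (Dc / Ds) (fun n => / log2 (Rw + INR n * Rw)) i 0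
  <= Ds * / log2 (Rw + INR i * Rw).
Proof.
  intros hR hDc hDcs; set (p := Dc / Ds); set (f := fun n => / log2 (Rw + INR n * Rw)).
  assert (hp : 0 <= p <= 1).
  { destruct (threshold_ratios Dc Dc Ds ltac:(lra) hDcs) as [[h1 h2] _].
    unfold p; rewrite Rdiv_diag in h2 by lra; lra. }
  assert (hfi : 0 < f i) by exact (Rinv_0_lt_compat _ (log2_stake_pos Rw i hR)).
  assert (Hle : binom_avg p f i 0
                <= (INR i + 1) * f i * binom_avg p (fun r => / (INR r + 1)) i 0).
  { rewrite <- binom_avg_scal; apply binom_avg_le; [exact hp|].
    intros r Hr; apply inv_log2_stake_le; [exact hR | lia]. }
  pose proof (binom_avg_inv_succ_le p i hp) as HW.
  replace Dc with (p * Ds) by (unfold p; field; lra).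
  change (/ log2 (Rw + INR i * Rw)) with (f i).
  set (W := binom_avg p (fun r => / (INR r + 1)) i 0) in *.
  apply Rle_trans with (p * Ds * ((INR i + 1) * f i * W));
    [apply Rmult_le_compat_l; [apply Rmult_le_pos; lra | exact Hle]|].
  replace (p * Ds * ((INR i + 1) * f i * W)) with (Ds * f i * (p * (INR i + 1) * W)) by ring.
  rewrite <- (Rmult_1_r (Ds * f i)) at 2.
  apply Rmult_le_compat_l; [apply Rmult_le_pos; lra | exact HW].
Qed.

Theorem mainTheorem10 (M Rw Dc Ds : R) (L : nat)
  (hM : 0 < M) (hR : 2 <= Rw) (hDc : 0 < Dc) (hDcs : Dc <= Ds) (hL : (1 <= L)%nat)
  (hphi : forall n : nat, (n < L)%nat ->
            0 < log2 (Rw + INR n * Rw) /\ log2 (Rw + INR n * Rw) <= Dc) :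
  infinite_sum (fun t => prob_T log2 M Rw Dc Ds L t) 1 /\
  exists E : R,
    infinite_sum (fun t => INR t * prob_T log2 M Rw Dc Ds L t) E /\
    E <= Ds * sum_f_R0 (fun n => 1 / (log2 (INR n + 1) + log2 Rw)) (L - 1).
Proof.
  destruct L as [|j]; [lia|]; replace (S j - 1)%nat with j by lia.
  destruct (passage_law log2 M Rw Dc Ds hM hDc hDcs (S j) 0 hphi) as [_ [Hsum Hmean]].
  replace (INR 0 * Rw) with 0 in Hsum, Hmean by (simpl; ring).
  split; [|exists (expected_time log2 Rw Dc Ds (S j) 0); split].
  - apply (infinite_sum_ext _ _ _ (fun t => eq_sym (prob_T_passage _ _ _ _ _ j t)) Hsum).
  - apply (infinite_sum_ext (fun t => INR t * passage_prob log2 M Rw Dc Ds 0 (S j) t));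
      [intro t; rewrite prob_T_passage; reflexivity | exact Hmean].
  - rewrite expected_time_binom_avg, !scal_sum; apply sum_Rle; intros i _.
    rewrite Rmult_comm, (Rmult_comm _ Ds), <- log2_stake, Rdiv_1_l by lra.
    exact (binom_avg_inv_log2_stake_le Rw Dc Ds i hR hDc hDcs).
Qed.
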